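(* Let $f:\mathbb{N}\to\mathbb{R}$ with $f(1)=1$, and assume there exist $A,c>0$ such that $|f(n)|\leq A c^n$ for all $n\geq2$. (i) If $c\in(0,1)$, then $$|f^{-1}(n)| \leq \frac{\Omega(n)\, A\, n^{\varsigma+e\ln c}}{2^{\varsigma}} \leq \frac{A\, n^{\varsigma+e\ln c}\ln n}{2^{\varsigma}\ln 2}, \quad n\geq2,$$ where $\varsigma>1$ is the unique root of $\zeta(s)=\frac{1}{A}+1$. (ii) If $c\in(0,1)$ and $A\leq1$, then $|f^{-1}(n)|\leq n^{\rho+e\ln c}$ for all $n\geq2$, where $\rho=1.72865\dots$ is the unique root $s>1$ of $\zeta(s)=2$. (iii) If $c>1$, then there exists $\widetilde{A}>0$ such that $$|f^{-1}(n)| \leq Ac^n + \frac{(\Omega(n)-1)\,A\, n^{\upsilon}}{2^{\upsilon}}\, c^{n/2} \leq \widetilde{A}\, c^n, \quad n\geq2,$$ where $\upsilon>1$ is the unique root of $\zeta(s)=\frac{1}{Ac^2}+1$.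
   Context: $f^{-1}$ denotes the Dirichlet inverse of $f$: the arithmetic function with $\sum_{d\mid n} f(n/d) f^{-1}(d)=\varepsilon(n)$ for all $n$, where $\varepsilon(1)=1$ and $\varepsilon(n)=0$ for $n\ge2$. $\Omega(n)$ is the number of prime factors of $n$ counted with multiplicity. $\zeta$ is the Riemann zeta function and $e$ is Euler's number. *)

From HB Require Import structures.
From mathcomp Require Import all_boot all_order all_algebra.
From mathcomp Require Import all_classical all_reals all_analysis.
Set Implicit Arguments. Unset Strict Implicit. Unset Printing Implicit Defensive.
Import Order.TTheory GRing.Theory Num.Theory.
Local Open Scope ring_scope.

Definition prime_Omega (n : nat) : nat := (\sum_(p <- primes n) logn p n)%N.

(* Riemann zeta function on real s (meaningful for s > 1). *)
Definition zeta (R : realType) (s : R) : R :=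
  limn (fun N : nat => \sum_(1 <= k < N) ((k%:R : R) `^ (- s))).

(* g is the Dirichlet inverse of f (arithmetic functions on positive integers;
   the value at 0 is irrelevant):  sum_{d | n} f(n/d) g(d) = eps(n), n >= 1. *)
Definition dirichlet_inverse (R : realType) (f g : nat -> R) : Prop :=
  forall n : nat, (0 < n)%N ->
    \sum_(d <- divisors n) f (n %/ d)%N * g d = (n == 1)%:R.

From HB Require Import structures.
From mathcomp Require Import all_boot all_order all_algebra.
From mathcomp Require Import all_classical all_reals all_analysis.
From mathcomp Require Import ring lra zify.
Import Order.TTheory GRing.Theory Num.Theory.
Set Implicit Arguments. Unset Strict Implicit. Unset Printing Implicit Defensive.
Local Open Scope ring_scope.

(* For n >= 2 the Dirichlet inverse satisfies g(n) = - sum_{d | n, d < n} f(n/d) g(d), so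
   |g(n)| <= B(n) follows by strong induction once the candidate bound B satisfies
   |f(n)| + sum_{d | n, 1 < d < n} |f(n/d)| B(d) <= B(n).  In each of (i)-(iii) the summand of
   a proper divisor d is at most K(n) (n/d)^(-s), so the sum is at most
   K(n) sum_{e | n, e > 1} e^(-s) <= K(n) (zeta(s) - 1), and the equation defining s makes this
   exactly what B(n) leaves beside |f(n)| (in (ii) |f(n)| is the summand d = 1 itself).
   Omega(n) enters through Omega(d) <= Omega(n) - 1 for proper divisors d, and for c <= 1 the
   estimate c^m <= m^(e ln c), i.e. e ln m <= m, turns the exponential decay of f into a power
   of m. *)

Lemma gt0_powRD (R : realType) (x r s : R) : 0 < x -> x `^ (r + s) = x `^ r * x `^ s.
Proof. by move=> x_gt0; rewrite powRD // (gt_eqF x_gt0) implybT. Qed.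

Section RealInequalities.
Variable R : realType.
Implicit Types a b c k x y : R.

Lemma expR1_mul_ln_le x : 0 < x -> expR 1 * ln x <= x.
Proof.
move=> x_gt0; have := expR_ge1Dx (ln x - 1).
rewrite addrCA subrr addr0 expRB lnK ?posrE // => ln_le.
by rewrite mulrC -ler_pdivlMr ?expR_gt0.
Qed.

Lemma expr_le_natr_powR c m : 0 < c -> c <= 1 -> (0 < m)%N ->
  c ^+ m <= (m%:R : R) `^ (expR 1 * ln c).
Proof.
move=> c_gt0 c_le1 m_gt0.
rewrite /powR gt_eqF ?ltr0n // -{1}(lnK c_gt0) -expRM_natl ler_expR.
have := @expR1_mul_ln_le m%:R; rewrite ltr0n => /(_ m_gt0); have := ln_le0 c_le1; nra.
Qed.

Lemma powR_mul_split x y a b : 0 < x -> 0 <= y ->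
  x `^ b * y `^ (a + b) = (x * y) `^ (a + b) * x `^ (- a).
Proof.
move=> x_gt0 y_ge0; rewrite powRM ?(ltW x_gt0) // mulrAC -gt0_powRD //.
by congr (_ `^ _ * _); ring.
Qed.

Lemma powR_le_mul_expR a k x : 0 < a -> 0 < k -> 0 < x ->
  x `^ k <= (k / a) `^ k * expR (a * x).
Proof.
move=> a_gt0 k_gt0 x_gt0; have ka_gt0 : 0 < k / a by rewrite divr_gt0.
have y_gt0 : 0 < a * x / k by rewrite divr_gt0 ?mulr_gt0.
have ln_x : ln x = ln (a * x / k) + ln (k / a).
  by rewrite -lnM ?posrE //; congr ln; field; rewrite !gt_eqF.
rewrite /powR !gt_eqF // -expRD ler_expR ln_x mulrDr addrC lerD2l.
apply: le_trans (_ : k * (a * x / k) <= _); first by rewrite ler_pM2l //; exact/ltW/ln_sublinear.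
by rewrite mulrC divfK ?gt_eqF.
Qed.

Lemma powR2_le_natr s n : 0 <= s -> (1 < n)%N -> 2 `^ s <= (n%:R : R) `^ s.
Proof. by move=> s_ge0 n_gt1; rewrite ge0_ler_powR ?nnegrE ?ler_nat ?ler0n. Qed.

Lemma expr_mul_add_le_powR_half c a x m d : 1 <= c -> 0 <= a -> 0 <= x -> (1 < m)%N -> (1 < d)%N ->
  c ^+ m * (a * c ^+ d + x * c `^ (d%:R / 2)) <= (a + x) * (c `^ ((m * d)%:R / 2) * c ^+ 2).
Proof.
move=> c_ge1 a_ge0 x_ge0 m_gt1 d_gt1; have c_ge0 : 0 <= c by apply: le_trans c_ge1.
apply: le_trans (_ : c ^+ m * ((a + x) * c ^+ d) <= _).
  rewrite ler_wpM2l ?exprn_ge0 // mulrDl lerD2l ler_wpM2l // -powR_mulrn // ler_powR //.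
  by rewrite ler_pdivrMr // ler_peMr ?ler0n //; lra.
rewrite mulrCA ler_wpM2l ?addr_ge0 // -!exprD -!powR_mulrn // -gt0_powRD ?(lt_le_trans ltr01) //.
apply: ler_powR => //.
have : ((2 * (m + d))%:R <= (m * d + 4)%:R :> R) by rewrite ler_nat; nia.
by rewrite !natrD !natrM; lra.
Qed.

Lemma exists_natr_powR_mul_half_le c k : 1 < c -> 0 < k ->
  exists2 M : R, 0 < M & forall n, (0 < n)%N -> (n%:R : R) `^ k * c `^ (n%:R / 2) <= M * c ^+ n.
Proof.
move=> c_gt1 k_gt0; have c_gt0 : 0 < c by apply: lt_trans c_gt1.
have a_gt0 : 0 < ln c / 2 by rewrite divr_gt0 // ln_gt0.
exists ((k / (ln c / 2)) `^ k) => [|n n_gt0]; first by rewrite powR_gt0 // divr_gt0.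
have -> : c ^+ n = c `^ (n%:R / 2) * c `^ (n%:R / 2).
  by rewrite -gt0_powRD // -splitr powR_mulrn // (ltW c_gt0).
rewrite mulrA ler_pM2r ?powR_gt0 //.
have -> : c `^ (n%:R / 2) = expR (ln c / 2 * n%:R) by rewrite /powR gt_eqF //; congr expR; ring.
by apply: powR_le_mul_expR; rewrite ?ltr0n.
Qed.

End RealInequalities.

Lemma ltn_div_dvd n d : (0 < n)%N -> (d %| n)%N -> (n %/ d < n)%N = (1 < d)%N.
Proof.
move=> n_gt0 /divnK; set m := (n %/ d)%N => nE.
by rewrite -nE in n_gt0 *; apply/idP/idP => ?; nia.
Qed.

Lemma proper_divisor_div_gt1 n d : (d %| n)%N -> (d < n)%N -> (1 < n %/ d)%N.
Proof. by move=> /divnK nE; rewrite -{1}nE => ?; nia. Qed.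

Lemma big_divisors_div (T : Type) (idx : T) (op : Monoid.com_law idx) n (F : nat -> T) :
  (0 < n)%N ->
  \big[op/idx]_(d <- divisors n) F d = \big[op/idx]_(d <- divisors n) F (n %/ d)%N.
Proof.
move=> n_gt0; rewrite -(big_map (fun d => n %/ d)%N xpredT F).
apply: perm_big; apply: uniq_perm; first exact: divisors_uniq.
  rewrite map_inj_in_uniq ?divisors_uniq // => x y.
  rewrite -!dvdn_divisors // => xn yn E.
  by rewrite -(mulKn x n_gt0) -(mulKn y n_gt0) -!divnA // E.
move=> x; apply/idP/mapP; rewrite -dvdn_divisors //.
  move=> xn; exists (n %/ x)%N; first by rewrite -dvdn_divisors // dvdn_div.
  by rewrite divnA // mulKn.
by case=> y; rewrite -dvdn_divisors // => yn ->; rewrite dvdn_div.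
Qed.

Lemma big_proper_divisors_1 (T : Type) (idx : T) (op : Monoid.com_law idx) n (F : nat -> T) :
  (1 < n)%N ->
  \big[op/idx]_(d <- divisors n | (d < n)%N) F d =
    op (F 1%N) (\big[op/idx]_(d <- divisors n | (1 < d < n)%N) F d).
Proof.
move=> n_gt1; rewrite big_mkcond (bigD1_seq 1%N) ?divisor1 ?divisors_uniq //= n_gt1.
congr (op _ _); rewrite [LHS]big_mkcond [RHS]big_mkcond [LHS]big_seq [RHS]big_seq.
apply: eq_bigr => d; rewrite -dvdn_divisors ?(ltnW n_gt1) // => /(dvdn_gt0 (ltnW n_gt1)).
by case: d => [|[|d]].
Qed.

Lemma ler_sum_uniq_subset (R : numDomainType) (I : eqType) (s t : seq I) (F : I -> R) :
  uniq s -> uniq t -> {subset s <= t} -> (forall i, i \in t -> 0 <= F i) ->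
  \sum_(i <- s) F i <= \sum_(i <- t) F i.
Proof.
move=> s_uniq t_uniq st F_ge0.
rewrite [X in _ <= X](bigID (mem s)) /= -[X in X <= _]addr0 lerD //.
  have t_s : perm_eq [seq i <- t | i \in s] s.
    by apply: uniq_perm; rewrite ?filter_uniq // => i; rewrite mem_filter andb_idr // => /st.
  by rewrite -[\sum_(i <- t | _) _]big_filter (perm_big _ t_s).
by rewrite big_seq_cond sumr_ge0 // => i /andP[/F_ge0].
Qed.

Section ZetaPartialSums.
Variables (R : realType) (s : R).

Definition zeta_partial (N : nat) : R := \sum_(1 <= k < N) (k%:R : R) `^ (- s).

Lemma zeta_partial_nondecreasing : nondecreasing_seq zeta_partial.
Proof.
apply/nondecreasing_seqP => -[|N]; first by rewrite /zeta_partial !big_geq.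
by rewrite /zeta_partial (big_nat_recr N.+1) //= lerDl powR_ge0.
Qed.

Hypothesis s_gt1 : 1 < s.

Let r := (2 : R) `^ (1 - s).

Let r_gt0 : 0 < r. Proof. exact: powR_gt0. Qed.

Let r_lt1 : r < 1.
Proof.
by rewrite /r /powR ifF ?pnatr_eq0 // expR_lt1 nmulr_rlt0 ?ln_gt0 ?ltr1n // subr_lt0.
Qed.

(* Cauchy condensation: the block [2^j, 2^(j+1)) contributes at most (2^(1-s))^j. *)
Lemma zeta_partial_expn2_le J : zeta_partial (2 ^ J) <= series (geometric 1 r) J.
Proof.
elim: J => [|J IH]; first by rewrite /zeta_partial big_geq // /series /= big_geq.
rewrite /zeta_partial (@big_cat_nat _ _ _ (2 ^ J)) //=; last 2 first.
- by rewrite expn_gt0.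
- by rewrite leq_pexp2l.
rewrite seriesSr /geometric /= mul1r lerD //.
have -> : r ^+ J = \sum_(2 ^ J <= k < 2 ^ J.+1) ((2 ^ J)%:R : R) `^ (- s).
  rewrite sumr_const_nat expnS mul2n -addnn addnK -[_ *+ _]mulr_natl natrX.
  rewrite -!powR_mulrn ?ler0n ?(ltW r_gt0) // /r -!powRrM -gt0_powRD //.
  by congr (_ `^ _); ring.
rewrite big_nat_cond [X in _ <= X]big_nat_cond; apply: ler_sum => k /andP[/andP[Jk _] _].
have k_gt0 : (0 < k)%N by apply: leq_trans Jk; rewrite expn_gt0.
rewrite !powRN lef_pV2 ?posrE ?powR_gt0 ?ltr0n ?expn_gt0 //.
by apply: ge0_ler_powR; rewrite ?nnegrE ?ler_nat ?ler0n ?(ltW (lt_trans ltr01 s_gt1)).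
Qed.

Lemma zeta_partial_le_zeta N : zeta_partial N <= zeta s.
Proof.
have bounded M : zeta_partial M <= (1 - r)^-1.
  apply: le_trans (zeta_partial_nondecreasing (ltnW (ltn_expl M (ltnSn 1)))) _.
  apply: le_trans (zeta_partial_expn2_le M) _.
  by rewrite -[X in _ <= X]mul1r geometric_le_lim // gtr0_norm.
apply: nondecreasing_cvgn_le; first exact: zeta_partial_nondecreasing.
apply: nondecreasing_is_cvgn; first exact: zeta_partial_nondecreasing.
by exists (1 - r)^-1 => _ [M _ <-].
Qed.

End ZetaPartialSums.

Section DivisorSums.
Variable R : realType.

Lemma sum_divisors_gt1_powR_le_zeta (s : R) n : 1 < s -> (0 < n)%N ->
  \sum_(e <- divisors n | (1 < e)%N) (e%:R : R) `^ (- s) <= zeta s - 1.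
Proof.
move=> s_gt1 n_gt0; pose F e := if (1 < e)%N then (e%:R : R) `^ (- s) else 0.
apply: (@le_trans _ _ (\sum_(1 <= e < n.+1) F e)).
  rewrite big_mkcond; apply: ler_sum_uniq_subset; rewrite ?divisors_uniq ?iota_uniq //.
    move=> e; rewrite -dvdn_divisors // mem_index_iota => e_dvd.
    by rewrite (dvdn_gt0 n_gt0) //= ltnS dvdn_leq.
  by move=> e _; rewrite /F; case: ifP => // _; apply: powR_ge0.
rewrite big_ltn // {1}/F /= add0r.
apply: le_trans (_ : zeta_partial s n.+1 - 1 <= _); last by rewrite lerD2r zeta_partial_le_zeta.
rewrite /zeta_partial [X in _ <= X - _]big_ltn // powR1 addrC addKr.
rewrite big_nat_cond [X in _ <= X]big_nat_cond.
by apply: ler_sum => e /andP[/andP[e_gt1 _] _]; rewrite /F e_gt1.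
Qed.

Lemma sum_proper_divisors_powR_le_zeta (s : R) n : 1 < s -> (0 < n)%N ->
  \sum_(d <- divisors n | (d < n)%N) ((n %/ d)%N%:R : R) `^ (- s) <= zeta s - 1.
Proof.
move=> s_gt1 n_gt0; rewrite big_mkcond big_divisors_div //.
rewrite (eq_big_seq (fun e => if (1 < e)%N then (e%:R : R) `^ (- s) else 0)) -?big_mkcond.
  exact: sum_divisors_gt1_powR_le_zeta.
move=> e; rewrite -dvdn_divisors // => e_dvd.
by rewrite ltn_div_dvd // divnA // mulKn.
Qed.

Lemma sum_divisors_le_zeta (P : pred nat) (F : nat -> R) (s K : R) n :
  1 < s -> (0 < n)%N -> 0 <= K -> (forall d, P d -> (d < n)%N) ->
  (forall d, (d %| n)%N -> P d -> F d <= K * ((n %/ d)%N%:R : R) `^ (- s)) ->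
  \sum_(d <- divisors n | P d) F d <= K * (zeta s - 1).
Proof.
move=> s_gt1 n_gt0 K_ge0 P_lt F_le.
apply: le_trans (ler_wpM2l K_ge0 (sum_proper_divisors_powR_le_zeta s_gt1 n_gt0)).
rewrite mulr_sumr big_mkcond [X in _ <= X]big_mkcond big_seq [X in _ <= X]big_seq.
apply: ler_sum => d; rewrite -dvdn_divisors // => d_dvd.
case: ifP => [Pd | _]; first by rewrite P_lt // F_le.
by case: ifP => // _; rewrite mulr_ge0 ?powR_ge0.
Qed.

End DivisorSums.

Lemma prime_Omega_widen n N : (0 < n)%N -> (n < N)%N ->
  prime_Omega n = (\sum_(0 <= p < N) logn p n)%N.
Proof.
move=> n_gt0 n_lt_N.
have primes_sub : perm_eq (primes n) [seq p <- index_iota 0 N | p \in primes n].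
  apply: uniq_perm; rewrite ?filter_uniq ?primes_uniq ?iota_uniq // => p.
  rewrite mem_filter mem_index_iota andb_idr // => /[dup] p_n.
  by rewrite mem_primes => /and3P[_ _ /(dvdn_leq n_gt0)] /leq_ltn_trans->.
rewrite /prime_Omega (perm_big _ primes_sub) big_filter big_mkcond /=.
by apply: eq_bigr => p _; case: ifP => // p_n; apply/esym/eqP; rewrite eqn0Ngt logn_gt0 p_n.
Qed.

Lemma prime_Omega_mul m n : (0 < m)%N -> (0 < n)%N ->
  prime_Omega (m * n) = (prime_Omega m + prime_Omega n)%N.
Proof.
move=> m_gt0 n_gt0; have mn_gt0 : (0 < m * n)%N by rewrite muln_gt0 m_gt0.
rewrite !(@prime_Omega_widen _ (m * n).+1) // ?ltnS ?leq_pmull ?leq_pmulr //.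
by rewrite -big_split; apply: eq_bigr => p _; rewrite lognM.
Qed.

Lemma prime_Omega_gt0 n : (1 < n)%N -> (0 < prime_Omega n)%N.
Proof.
move=> n_gt1; have p_n : pdiv n \in primes n by rewrite mem_primes pdiv_prime ?pdiv_dvd ?(ltnW n_gt1).
by rewrite /prime_Omega (big_rem _ p_n) ltn_addr // logn_gt0.
Qed.

Lemma prime_Omega_proper_divisor n d : (d %| n)%N -> (d < n)%N ->
  (prime_Omega d < prime_Omega n)%N.
Proof.
move=> d_dvd d_lt; have n_gt0 : (0 < n)%N by apply: leq_ltn_trans d_lt.
have m_gt1 := proper_divisor_div_gt1 d_dvd d_lt.
rewrite -(divnK d_dvd) prime_Omega_mul ?(ltnW m_gt1) ?(dvdn_gt0 n_gt0) //.
by rewrite addnC -addn1 leq_add2l prime_Omega_gt0.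
Qed.

Lemma natr_prime_Omega_proper_divisor (R : numDomainType) n d :
  (d %| n)%N -> (d < n)%N -> ((prime_Omega d)%:R : R) <= (prime_Omega n)%:R - 1.
Proof.
by move=> d_dvd d_lt; rewrite lerBrDr natr1 ler_nat prime_Omega_proper_divisor.
Qed.

Lemma expn2_prime_Omega_le n : (0 < n)%N -> (2 ^ prime_Omega n <= n)%N.
Proof.
move=> n_gt0; rewrite {2}(prod_prime_decomp n_gt0) prime_decompE big_map expn_sum /=.
rewrite big_seq [X in (_ <= X)%N]big_seq.
apply: leq_prod => p p_n; rewrite leq_exp2r ?logn_gt0 //.
by move: p_n; rewrite mem_primes => /and3P[/prime_gt1].
Qed.

Lemma prime_Omega_le n : (prime_Omega n <= n)%N.
Proof.
case: n => [|n]; first by rewrite /prime_Omega big_nil.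
apply: leq_trans (expn2_prime_Omega_le (ltn0Sn n)).
exact/ltnW/ltn_expl.
Qed.

Lemma natr_prime_Omega_le_ln (R : realType) n : (0 < n)%N ->
  ((prime_Omega n)%:R : R) <= ln n%:R / ln 2.
Proof.
move=> n_gt0; rewrite ler_pdivlMr ?ln_gt0 ?ltr1n // mulr_natl -lnXn //.
by rewrite ler_ln ?posrE ?exprn_gt0 ?ltr0n // -natrX ler_nat expn2_prime_Omega_le.
Qed.

Lemma exists_prime_Omega_term_le_expr (R : realType) (A c u : R) : 0 < A -> 1 < c -> 0 <= u ->
  exists2 M : R, 0 < M & forall n, (0 < n)%N ->
  ((prime_Omega n)%:R - 1) * A * (n%:R `^ u) / (2 `^ u) * (c `^ (n%:R / 2)) <= M * c ^+ n.
Proof.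
move=> A_gt0 c_gt1 u_ge0.
have [M M_gt0 le_M] := exists_natr_powR_mul_half_le c_gt1 (ltr_wpDl u_ge0 ltr01).
exists (A * M) => [|n n_gt0]; first exact: mulr_gt0.
have T_ge1 : 1 <= 2 `^ u :> R by rewrite -[X in X <= _](powRr0 2); apply: ler_powR; rewrite ?ler1n.
have O_le : ((prime_Omega n)%:R - 1) / 2 `^ u <= n%:R :> R.
  rewrite ler_pdivrMr ?(lt_le_trans ltr01) //.
  have : (prime_Omega n)%:R <= n%:R :> R by rewrite ler_nat prime_Omega_le.
  have : n%:R <= n%:R * 2 `^ u :> R by rewrite ler_peMr.
  lra.
set Q := n%:R `^ u * c `^ (n%:R / 2).
have -> : ((prime_Omega n)%:R - 1) * A * n%:R `^ u / 2 `^ u * c `^ (n%:R / 2) =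
    A * Q * (((prime_Omega n)%:R - 1) / 2 `^ u) by rewrite /Q; ring.
apply: le_trans (_ : A * Q * n%:R <= _).
  by rewrite ler_wpM2l // mulr_ge0 ?(ltW A_gt0) // mulr_ge0 ?powR_ge0.
rewrite -!mulrA ler_pM2l // /Q mulrCA mulrC -{2}(powRr1 (ler0n R n)) -gt0_powRD ?ltr0n //.
exact: le_M.
Qed.

Section DirichletInverse.
Variables (R : realType) (f g : nat -> R).
Hypotheses (f1 : f 1%N = 1) (fg : dirichlet_inverse f g).

Lemma dirichlet_inverse1 : g 1%N = 1.
Proof. by have := fg (ltnSn 0); rewrite /divisors /= big_seq1 divn1 f1 mul1r. Qed.

Lemma norm_dirichlet_inverse_le n : (1 < n)%N ->
  `|g n| <= `|f n| + \sum_(d <- divisors n | (1 < d < n)%N) `|f (n %/ d)%N| * `|g d|.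
Proof.
move=> n_gt1; have n_gt0 := ltnW n_gt1.
have := fg n_gt0; rewrite (bigD1_seq n) ?divisors_id ?divisors_uniq //= divnn n_gt0 f1 mul1r.
rewrite gtn_eqF // => /eqP; rewrite addr_eq0 => /eqP->; rewrite normrN.
have -> : \sum_(d <- divisors n | d != n) f (n %/ d)%N * g d =
           \sum_(d <- divisors n | (d < n)%N) f (n %/ d)%N * g d.
  rewrite big_seq_cond [RHS]big_seq_cond; apply: eq_bigl => d.
  case: (boolP (d \in divisors n)) => //=; rewrite -dvdn_divisors // => d_dvd.
  by rewrite ltn_neqAle dvdn_leq // andbT.
apply: le_trans (ler_norm_sum _ _ _) _.
rewrite big_proper_divisors_1 //= divn1 normrM dirichlet_inverse1 normr1 mulr1 lerD2l.
by under eq_bigr do rewrite normrM.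
Qed.

Lemma dirichlet_inverse_le_of_rec (B : nat -> R) :
  (forall n, (1 < n)%N ->
     `|f n| + \sum_(d <- divisors n | (1 < d < n)%N) `|f (n %/ d)%N| * B d <= B n) ->
  forall n, (1 < n)%N -> `|g n| <= B n.
Proof.
move=> B_rec; elim/ltn_ind => n IH n_gt1.
apply: le_trans (norm_dirichlet_inverse_le n_gt1) (le_trans _ (B_rec n n_gt1)).
rewrite lerD2l; apply: ler_sum => d /andP[d_gt1 d_lt].
by rewrite ler_wpM2l ?IH.
Qed.

End DirichletInverse.

Section DirichletInverseBounds.
Variables (R : realType) (f g : nat -> R) (A c : R).
Hypotheses (f1 : f 1%N = 1) (fg : dirichlet_inverse f g).
Hypotheses (A_gt0 : 0 < A) (c_gt0 : 0 < c).
Hypothesis f_le : forall n, (1 < n)%N -> `|f n| <= A * c ^+ n.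

Lemma norm_le_powR_expR1_ln m : c <= 1 -> (1 < m)%N ->
  `|f m| <= A * (m%:R : R) `^ (expR 1 * ln c).
Proof.
move=> c_le1 m_gt1; apply: le_trans (f_le m_gt1) _.
by rewrite ler_pM2l // expr_le_natr_powR // ltnW.
Qed.

Lemma norm_dirichlet_inverse_le_Omega (s : R) : c <= 1 -> 1 < s -> zeta s = A^-1 + 1 ->
  forall n, (1 < n)%N ->
  `|g n| <= (prime_Omega n)%:R * A * (n%:R `^ (s + expR 1 * ln c)) / (2 `^ s).
Proof.
move=> c_le1 s_gt1 zeta_s; have s_ge0 := ltW (lt_trans ltr01 s_gt1).
apply: (dirichlet_inverse_le_of_rec f1 fg) => n n_gt1.
set gam := expR 1 * ln c; set O := (prime_Omega n)%:R; set T := 2 `^ s.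
have n_gt0 := ltnW n_gt1; have T_gt0 : 0 < T by rewrite powR_gt0.
have O_ge1 : 1 <= O by rewrite ler1n prime_Omega_gt0.
pose K := A * A * (O - 1) / T * n%:R `^ (s + gam).
have head : `|f n| <= A * n%:R `^ (s + gam) / T.
  apply: le_trans (norm_le_powR_expR1_ln c_le1 n_gt1) _.
  rewrite gt0_powRD ?ltr0n // -mulrA ler_pM2l // ler_pdivlMr // [X in _ <= X]mulrC.
  by rewrite ler_pM2l ?powR_gt0 ?ltr0n // powR2_le_natr.
have tail : \sum_(d <- divisors n | (1 < d < n)%N)
    `|f (n %/ d)%N| * ((prime_Omega d)%:R * A * d%:R `^ (s + gam) / T) <= K * (zeta s - 1).
  apply: sum_divisors_le_zeta => //; [|by move=> d /andP[]|].
    by rewrite /K !mulr_ge0 ?invr_ge0 ?subr_ge0 ?powR_ge0 ?(ltW A_gt0) ?(ltW T_gt0).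
  move=> d d_dvd /andP[d_gt1 d_lt]; have m_gt1 := proper_divisor_div_gt1 d_dvd d_lt.
  have m_gt0 : 0 < (n %/ d)%:R :> R by rewrite ltr0n ltnW.
  have := powR_mul_split s gam m_gt0 (ler0n R d); rewrite -natrM divnK // => split_n.
  have -> : K * (n %/ d)%:R `^ (- s) =
      A * (n %/ d)%:R `^ gam * ((O - 1) * A * d%:R `^ (s + gam) / T).
    by rewrite /K -mulrA -split_n; ring.
  apply: ler_pM; first exact: normr_ge0.
  - by rewrite !mulr_ge0 ?invr_ge0 ?powR_ge0 ?(ltW A_gt0) ?(ltW T_gt0).
  - exact: norm_le_powR_expR1_ln.
  rewrite ler_pM2r ?invr_gt0 // ler_pM2r ?powR_gt0 ?ltr0n ?(ltnW d_gt1) // ler_pM2r //.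
  exact: natr_prime_Omega_proper_divisor.
apply: le_trans (lerD head tail) _; rewrite zeta_s addrK.
suff -> : A * n%:R `^ (s + gam) / T + K * A^-1 = O * A * n%:R `^ (s + gam) / T by [].
by rewrite /K; field; rewrite !gt_eqF.
Qed.

Lemma norm_dirichlet_inverse_le_powR (rho : R) : c <= 1 -> A <= 1 -> 1 < rho -> zeta rho = 2 ->
  forall n, (1 < n)%N -> `|g n| <= n%:R `^ (rho + expR 1 * ln c).
Proof.
move=> c_le1 A_le1 rho_gt1 zeta_rho; apply: (dirichlet_inverse_le_of_rec f1 fg) => n n_gt1.
set gam := expR 1 * ln c; set K := n%:R `^ (rho + gam); have n_gt0 := ltnW n_gt1.
apply: le_trans (_ : \sum_(d <- divisors n | (d < n)%N) `|f (n %/ d)%N| * d%:R `^ (rho + gam) <= _).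
  by rewrite big_proper_divisors_1 //= divn1 mulr1n powR1 mulr1.
apply: (@le_trans _ _ (K * (zeta rho - 1))); last by rewrite zeta_rho; lra.
apply: sum_divisors_le_zeta => //; first by rewrite /K powR_ge0.
move=> d d_dvd d_lt; have m_gt1 := proper_divisor_div_gt1 d_dvd d_lt.
have m_gt0 : 0 < (n %/ d)%:R :> R by rewrite ltr0n ltnW.
have := powR_mul_split rho gam m_gt0 (ler0n R d); rewrite -natrM divnK // => <-.
rewrite ler_pM2r ?powR_gt0 ?ltr0n ?(dvdn_gt0 n_gt0) //.
apply: le_trans (norm_le_powR_expR1_ln c_le1 m_gt1) _.
by rewrite ger_pMl ?powR_gt0.
Qed.

Lemma norm_mul_expr_bound_le (u : R) n d : 1 <= c -> 0 <= u -> (d %| n)%N -> (1 < d < n)%N ->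
  `|f (n %/ d)%N| *
    (A * c ^+ d + ((prime_Omega d)%:R - 1) * A * d%:R `^ u / 2 `^ u * c `^ (d%:R / 2))
  <= A * (((prime_Omega n)%:R - 1) * A * d%:R `^ u / 2 `^ u * (c `^ (n%:R / 2) * c ^+ 2)).
Proof.
move=> c_ge1 u_ge0 d_dvd /andP[d_gt1 d_lt]; have m_gt1 := proper_divisor_div_gt1 d_dvd d_lt.
set T := 2 `^ u; set P := d%:R `^ u; set X := ((prime_Omega d)%:R - 1) * A * P / T.
have T_gt0 : 0 < T by rewrite powR_gt0.
have P_gt0 : 0 < P by rewrite powR_gt0 // ltr0n (ltnW d_gt1).
have X_ge0 : 0 <= X.
  by rewrite !mulr_ge0 ?invr_ge0 ?subr_ge0 ?ler1n ?prime_Omega_gt0 ?(ltW A_gt0) ?(ltW T_gt0) ?(ltW P_gt0).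
apply: le_trans (_ : A * (c ^+ (n %/ d) * (A * c ^+ d + X * c `^ (d%:R / 2))) <= _).
  rewrite mulrA ler_wpM2r ?f_le //.
  by apply: addr_ge0; apply: mulr_ge0; rewrite ?powR_ge0 ?exprn_ge0 ?(ltW A_gt0) ?(ltW c_gt0).
rewrite ler_pM2l //; apply: le_trans (expr_mul_add_le_powR_half c_ge1 (ltW A_gt0) X_ge0 m_gt1 d_gt1) _.
rewrite divnK // ler_pM2r ?mulr_gt0 ?powR_gt0 ?exprn_gt0 //.
apply: le_trans (_ : (prime_Omega d)%:R * A * P / T <= _).
  have : A <= A * P / T by rewrite ler_pdivlMr // ler_pM2l // powR2_le_natr.
  by rewrite /X; lra.
rewrite ler_pM2r ?invr_gt0 // ler_pM2r // ler_pM2r //.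
exact: natr_prime_Omega_proper_divisor.
Qed.

Lemma norm_dirichlet_inverse_le_expr (u : R) : 1 <= c -> 1 < u -> zeta u = (A * c ^+ 2)^-1 + 1 ->
  forall n, (1 < n)%N ->
  `|g n| <= A * c ^+ n
            + ((prime_Omega n)%:R - 1) * A * (n%:R `^ u) / (2 `^ u) * (c `^ (n%:R / 2)).
Proof.
move=> c_ge1 u_gt1 zeta_u; have u_ge0 := ltW (lt_trans ltr01 u_gt1).
apply: (dirichlet_inverse_le_of_rec f1 fg) => n n_gt1.
set O := (prime_Omega n)%:R; set T := 2 `^ u; set C := c `^ (n%:R / 2) * c ^+ 2.
have n_gt0 := ltnW n_gt1; have T_gt0 : 0 < T by rewrite powR_gt0.
have O_ge1 : 1 <= O by rewrite ler1n prime_Omega_gt0.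
pose K := A * A * (O - 1) / T * n%:R `^ u * C.
rewrite lerD ?f_le // (@le_trans _ _ (K * (zeta u - 1))) //; last first.
  suff -> : K * (zeta u - 1) = (O - 1) * A * n%:R `^ u / T * c `^ (n%:R / 2) by [].
  by rewrite zeta_u addrK /K /C; field; rewrite !gt_eqF ?exprn_gt0.
apply: sum_divisors_le_zeta => //; [|by move=> d /andP[]|].
  by rewrite /K !mulr_ge0 ?invr_ge0 ?subr_ge0 ?powR_ge0 ?(ltW A_gt0) ?(ltW T_gt0) ?(ltW c_gt0).
move=> d d_dvd d_range; have m_gt1 := proper_divisor_div_gt1 d_dvd (proj2 (andP d_range)).
have m_gt0 : 0 < (n %/ d)%:R :> R by rewrite ltr0n ltnW.
have := powR_mul_split u 0 m_gt0 (ler0n R d).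
rewrite powRr0 mul1r !addr0 -natrM divnK // => split_n.
have -> : K * (n %/ d)%:R `^ (- u) = A * ((O - 1) * A * d%:R `^ u / T * C).
  by rewrite split_n /K; ring.
exact: norm_mul_expr_bound_le.
Qed.

End DirichletInverseBounds.

Unset Implicit Arguments.

Theorem proposition3p13 (R : realType) (f finv : nat -> R) (A c : R) :
  f 1%N = 1 ->
  dirichlet_inverse f finv ->
  0 < A -> 0 < c ->
  (forall n : nat, (2 <= n)%N -> `|f n| <= A * c ^+ n) ->
  (* (i) *)
  ((c < 1) ->
   forall vs : R, 1 < vs -> zeta vs = A^-1 + 1 ->
   forall n : nat, (2 <= n)%N ->
     `|finv n| <= (prime_Omega n)%:R * A * (n%:R `^ (vs + expR 1 * ln c)) / (2 `^ vs)
     /\ (prime_Omega n)%:R * A * (n%:R `^ (vs + expR 1 * ln c)) / (2 `^ vs)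
        <= A * (n%:R `^ (vs + expR 1 * ln c)) * ln (n%:R) / ((2 `^ vs) * ln 2)) /\
  (* (ii) *)
  ((c < 1) -> A <= 1 ->
   forall rho : R, 1 < rho -> zeta rho = 2 ->
   forall n : nat, (2 <= n)%N ->
     `|finv n| <= n%:R `^ (rho + expR 1 * ln c)) /\
  (* (iii) *)
  ((1 < c) ->
   forall ups : R, 1 < ups -> zeta ups = (A * c ^+ 2)^-1 + 1 ->
   exists At : R, 0 < At /\
   forall n : nat, (2 <= n)%N ->
     `|finv n| <= A * c ^+ n
        + ((prime_Omega n)%:R - 1) * A * (n%:R `^ ups) / (2 `^ ups) * (c `^ (n%:R / 2))
     /\ A * c ^+ n
        + ((prime_Omega n)%:R - 1) * A * (n%:R `^ ups) / (2 `^ ups) * (c `^ (n%:R / 2))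
        <= At * c ^+ n).
Proof.
move=> f1 fg A_gt0 c_gt0 f_le; split; [|split].
- move=> c_lt1 s s_gt1 zeta_s n n_gt1; split.
    exact: (norm_dirichlet_inverse_le_Omega f1 fg A_gt0 c_gt0 f_le (ltW c_lt1)).
  set P := n%:R `^ _; set T := 2 `^ s.
  have T_gt0 : 0 < T by rewrite powR_gt0.
  have ln2_gt0 : 0 < ln 2 :> R by rewrite ln_gt0 ?ltr1n.
  rewrite [X in X <= _](_ : _ = A * P / T * (prime_Omega n)%:R); last by ring.
  rewrite [X in _ <= X](_ : _ = A * P / T * (ln n%:R / ln 2)); last by field; rewrite !gt_eqF.
  rewrite ler_wpM2l ?natr_prime_Omega_le_ln ?(ltnW n_gt1) //.
  by rewrite divr_ge0 ?mulr_ge0 ?powR_ge0 ?(ltW A_gt0) ?(ltW T_gt0).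
- move=> c_lt1 A_le1 rho rho_gt1 zeta_rho.
  exact: (norm_dirichlet_inverse_le_powR f1 fg A_gt0 c_gt0 f_le (ltW c_lt1)).
- move=> c_gt1 u u_gt1 zeta_u.
  have [M M_gt0 le_M] := exists_prime_Omega_term_le_expr A_gt0 c_gt1 (ltW (lt_trans ltr01 u_gt1)).
  exists (A + M); split => [|n n_gt1]; first exact: addr_gt0.
  split; first exact: (norm_dirichlet_inverse_le_expr f1 fg A_gt0 c_gt0 f_le (ltW c_gt1)).
  by rewrite [X in _ <= X]mulrDl lerD2l le_M // ltnW.
Qed.
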